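(* Let $R$ be a unique factorization domain. Let $n,m\geqslant 1$, $s_1,\dots,s_n\in(\operatorname{Sqf} R)\setminus R^{\ast}$ and $t_1,\dots,t_m\in(\operatorname{Sqf} R)\setminus R^{\ast}$, integers $k_1,\dots,k_n\geqslant 1$ and $l_1,\dots,l_m\geqslant 1$, and $c,d\in R^{\ast}$, such that $s_i\mid s_{i+1}$ and $s_i\not\sim s_{i+1}$ for $i=1,\dots,n-1$, and $t_i\mid t_{i+1}$ and $t_i\not\sim t_{i+1}$ for $i=1,\dots,m-1$. If $$c\,s_1^{k_1}s_2^{k_2}\cdots s_n^{k_n}=d\,t_1^{l_1}t_2^{l_2}\cdots t_m^{l_m},$$ then $n=m$, and $s_i\sim t_i$ and $k_i=l_i$ for $i=1,\dots,n$.
   Context: $R^{\ast}$ denotes the set of invertible elements of $R$; $a\sim b$ means $a$ and $b$ are associated; $a\mid b$ means $a$ divides $b$. An element $a\in R$ is square-free if it cannot be written as $a=b^2c$ with $b\in R\setminus R^{\ast}$ and $c\in R$; $\operatorname{Sqf} R$ denotes the set of square-free elements of $R$. *)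

From mathcomp Require Import all_boot all_algebra.
Set Implicit Arguments. Unset Strict Implicit. Unset Printing Implicit Defensive.
Import GRing.Theory.
Local Open Scope ring_scope.

Definition dvdR {R : comRingType} (a b : R) : Prop := exists c : R, b = c * a.

Definition assocR {R : comUnitRingType} (a b : R) : Prop :=
  exists2 u : R, u \is a GRing.unit & b = u * a.

Definition irreducibleR {R : comUnitRingType} (p : R) : Prop :=
  [/\ p != 0, p \isn't a GRing.unit &
      forall a b : R, p = a * b -> a \is a GRing.unit \/ b \is a GRing.unit].

Definition isUFD (R : idomainType) : Prop :=
  (forall x : R, x != 0 -> x \isn't a GRing.unit ->
     exists s : seq R, (forall p, p \in s -> irreducibleR p) /\
                       x = \prod_(p <- s) p) /\
  (forall s t : seq R,
     (forall p, p \in s -> irreducibleR p) ->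
     (forall p, p \in t -> irreducibleR p) ->
     \prod_(p <- s) p = \prod_(p <- t) p ->
     exists t' : seq R, perm_eq t t' /\ size s = size t' /\
       forall i, (i < size s)%N -> assocR (nth 0 s i) (nth 0 t' i)).

Definition squarefree {R : comUnitRingType} (a : R) : Prop :=
  ~ exists b c : R, b \isn't a GRing.unit /\ a = b ^+ 2 * c.

From mathcomp Require Import all_boot all_algebra.
From mathcomp Require Import ring zify.
Import GRing.Theory.
Local Open Scope ring_scope.
Set Implicit Arguments. Unset Strict Implicit.

(* Every [s i] divides the top factor [s n], so the left-hand side divides a
   power of [s n]. Irreducibles are prime in a UFD, so the square-free [t m],
   which divides the right-hand side, divides [s n]; by symmetry [s n] and
   [t m] are associated. Cancelling one copy of this top factor gives an
   equation of the same shape with its exponent lowered by one (the factor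
   disappears when its exponent was 1), and induction on the total exponent
   concludes: [s i] not associated to [s i.+1] rules out that only one of the
   two chains loses its top factor. *)

Section Divisibility.
Variable R : comUnitRingType.
Implicit Types a b c u x : R.

Lemma dvdR_refl a : dvdR a a.
Proof. by exists 1; rewrite mul1r. Qed.

Lemma dvdR_trans a b c : dvdR a b -> dvdR b c -> dvdR a c.
Proof. by move=> [x ->] [y ->]; exists (y * x); rewrite mulrA. Qed.

Lemma dvdR0 a : dvdR a 0.
Proof. by exists 0; rewrite mul0r. Qed.

Lemma dvdR_mull x a b : dvdR a b -> dvdR a (x * b).
Proof. by move=> [y ->]; exists (x * y); rewrite mulrA. Qed.

Lemma dvdR_mul a b a' b' : dvdR a b -> dvdR a' b' -> dvdR (a * a') (b * b').
Proof. by move=> [x ->] [y ->]; exists (x * y); ring. Qed.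

Lemma dvdR_exp a b e : dvdR a b -> dvdR (a ^+ e) (b ^+ e).
Proof. by move=> [x ->]; exists (x ^+ e); rewrite exprMn. Qed.

Lemma dvdR1_unit a : dvdR a 1 -> a \is a GRing.unit.
Proof. by move=> [x hx]; have := unitr1 R; rewrite hx unitrM => /andP[]. Qed.

Lemma dvdR_prod_mem (r : seq R) a : a \in r -> dvdR a (\prod_(x <- r) x).
Proof.
by move=> ar; rewrite (big_rem _ ar) /=; exists (\prod_(x <- rem a r) x); rewrite mulrC.
Qed.

Lemma assocR_unitl u a : u \is a GRing.unit -> assocR a (u * a).
Proof. by exists u. Qed.

Lemma assocR_sym a b : assocR a b -> assocR b a.
Proof. by move=> [u uu ->]; exists u^-1; rewrite ?unitrV ?mulKr. Qed.

Lemma assocR_trans a b c : assocR a b -> assocR b c -> assocR a c.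
Proof.
by move=> [u uu ->] [v vv ->]; exists (v * u); rewrite ?unitrM ?uu ?vv ?mulrA.
Qed.

Lemma assocR_dvdR a b : assocR a b -> dvdR a b.
Proof. by move=> [u _ ->]; exists u. Qed.

Lemma dvdR_assocl a b c : assocR a b -> dvdR a c -> dvdR b c.
Proof. by move/assocR_sym/assocR_dvdR; apply: dvdR_trans. Qed.

Lemma dvdR_cancel_unitl u a b : u \is a GRing.unit -> dvdR a (u * b) -> dvdR a b.
Proof.
by move=> uu /dvdR_trans; apply; apply/assocR_dvdR/assocR_sym/assocR_unitl.
Qed.

Lemma irreducibleR_unitl u p :
  u \is a GRing.unit -> irreducibleR p -> irreducibleR (u * p).
Proof.
move=> uu [p0 pu irr_p]; split.
- by apply: contraNneq p0 => up0; rewrite -(mulKr uu p) up0 mulr0.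
- by rewrite unitrM uu.
move=> a b uab; have /irr_p[ua|] : p = (u^-1 * a) * b by rewrite -mulrA -uab mulKr.
  by left; rewrite -(mulVKr uu a) unitrM uu.
by right.
Qed.

Lemma squarefree_dvdR a b : squarefree a -> dvdR b a -> squarefree b.
Proof.
move=> sqf_a [x ea] [y [z [yu eb]]]; apply: sqf_a.
by exists y, (x * z); split => //; rewrite ea eb; ring.
Qed.

Lemma squarefree_sqr_dvdR a b : squarefree a -> dvdR (b ^+ 2) a -> b \is a GRing.unit.
Proof.
move=> sqf_a [x ea]; have [//|bu] := boolP (b \is a GRing.unit).
by case: sqf_a; exists b, x; rewrite ea mulrC.
Qed.

Lemma squarefree_neq0 a : squarefree a -> a != 0.
Proof.
by move=> sqf_a; apply/eqP => a0; apply: sqf_a; exists 0, 0; rewrite unitr0 a0 mulr0.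
Qed.

End Divisibility.

Lemma dvdR_antisym (R : idomainType) (a b : R) :
  a != 0 -> dvdR a b -> dvdR b a -> assocR a b.
Proof.
move=> a0 [x ->] [y ea]; exists x => //.
have yx1 : y * x = 1 by apply: (mulIf a0); rewrite mul1r -mulrA -ea.
by have := unitr1 R; rewrite -yx1 unitrM => /andP[].
Qed.

Section UniqueFactorization.
Variable R : idomainType.
Hypothesis HR : isUFD R.
Implicit Types a b p q x y : R.

Lemma ufd_factor x : x != 0 ->
  exists u r, [/\ u \is a GRing.unit, forall p, p \in r -> irreducibleR p &
                  x = u * \prod_(p <- r) p].
Proof.
move=> x0; have [xu|xNu] := boolP (x \is a GRing.unit).
  by exists x, [::]; rewrite big_nil mulr1.
have [r [irr_r ->]] := HR.1 x x0 xNu.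
by exists 1, r; rewrite unitr1 mul1r.
Qed.

Lemma ufd_assoc_mem (r r' : seq R) q :
  (forall p, p \in r -> irreducibleR p) -> (forall p, p \in r' -> irreducibleR p) ->
  \prod_(p <- r) p = \prod_(p <- r') p -> q \in r' ->
  exists2 p, p \in r & assocR p q.
Proof.
move=> irr_r irr_r' e q_r'.
have [r'' [perm_r' [size_r assoc_r]]] := HR.2 _ _ irr_r irr_r' e.
have q_r'' : q \in r'' by rewrite -(perm_mem perm_r').
have i_lt : (index q r'' < size r)%N by rewrite size_r index_mem.
exists (nth 0 r (index q r'')); first exact: mem_nth.
by rewrite -{2}(nth_index 0 q_r''); apply: assoc_r.
Qed.

(* Irreducibles are prime: factor a, b and the cofactor of p, and match the
   irreducible factors of both sides of [a * b = e * p]. *)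
Lemma irreducible_prime p a b :
  irreducibleR p -> dvdR p (a * b) -> dvdR p a \/ dvdR p b.
Proof.
have [->|a0] := eqVneq a 0; first by left; exact: dvdR0.
have [->|b0] := eqVneq b 0; first by right; exact: dvdR0.
move=> irr_p [e eab].
have e0 : e != 0.
  by apply: contraTneq (mulf_neq0 a0 b0) => e0; rewrite eab e0 mul0r eqxx.
have [ua [ra [uau irr_a ea]]] := ufd_factor a0.
have [ub [rb [ubu irr_b eb]]] := ufd_factor b0.
have [ue [re [ueu irr_e ee]]] := ufd_factor e0.
have uab : ua * ub \is a GRing.unit by rewrite unitrM uau ubu.
set w := ue / (ua * ub).
have wu : w \is a GRing.unit by rewrite unitrM ueu unitrV.
have E : \prod_(q <- ra ++ rb) q = \prod_(q <- w * p :: re) q.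
  apply: (mulrI uab); rewrite big_cat big_cons /=.
  have -> : ua * ub * (w * p * \prod_(q <- re) q) =
            (w * (ua * ub)) * (p * \prod_(q <- re) q) by ring.
  rewrite divrK //; transitivity (a * b); first by rewrite ea eb; ring.
  by rewrite eab ee; ring.
have irr_ab q : q \in ra ++ rb -> irreducibleR q.
  by rewrite mem_cat => /orP[]; [exact: irr_a | exact: irr_b].
have irr_pe q : q \in w * p :: re -> irreducibleR q.
  by rewrite inE => /orP[/eqP ->|]; [exact: irreducibleR_unitl | exact: irr_e].
have [q] := ufd_assoc_mem irr_ab irr_pe E (mem_head _ _).
have p_wp := assocR_sym (assocR_unitl p wu).
rewrite mem_cat => /orP[] q_r /assocR_trans /(_ p_wp) /assocR_sym /assocR_dvdR p_q.
- by left; rewrite ea; apply/dvdR_mull/(dvdR_trans p_q)/dvdR_prod_mem.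
- by right; rewrite eb; apply/dvdR_mull/(dvdR_trans p_q)/dvdR_prod_mem.
Qed.

Lemma irreducible_dvd_exp p y e : irreducibleR p -> dvdR p (y ^+ e) -> dvdR p y.
Proof.
move=> irr_p; elim: e => [|e IH].
  by rewrite expr0 => /dvdR1_unit pu; case: irr_p => _ /negP.
by rewrite exprS => /(irreducible_prime irr_p)[// | /IH].
Qed.

Lemma squarefree_prod_dvdR (r : seq R) y :
  (forall q, q \in r -> irreducibleR q) -> squarefree (\prod_(q <- r) q) ->
  (forall q, q \in r -> dvdR q y) -> dvdR (\prod_(q <- r) q) y.
Proof.
elim: r y => [|q r IH] y irr sqf dvd_y.
  by rewrite big_nil; exists y; rewrite mulr1.
rewrite big_cons in sqf *.
have r_qr : {subset r <= q :: r} by move=> q' q'r; rewrite inE q'r orbT.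
have irr_r q' : q' \in r -> irreducibleR q' by move/r_qr/irr.
have [y' ey] := dvd_y q (mem_head _ _).
rewrite ey [y' * q]mulrC; apply: dvdR_mul; first exact: dvdR_refl.
apply: IH => //; first exact: squarefree_dvdR sqf (dvdR_mull _ (dvdR_refl _)).
move=> q' q'r; have := dvd_y q' (r_qr _ q'r).
rewrite ey => /(irreducible_prime (irr_r _ q'r))[//| q'_q].
have [_ /negP q'Nu _] := irr_r _ q'r; case: q'Nu.
apply: squarefree_sqr_dvdR sqf _.
by rewrite expr2; apply: dvdR_mul q'_q (dvdR_prod_mem q'r).
Qed.

Lemma squarefree_dvd_exp s y e : squarefree s -> dvdR s (y ^+ e) -> dvdR s y.
Proof.
move=> sqf_s s_ye.
have [u [r [uu irr_r es]]] := ufd_factor (squarefree_neq0 sqf_s).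
have r_s : assocR (\prod_(q <- r) q) s by rewrite es; apply: assocR_unitl.
apply: (dvdR_assocl r_s); apply: squarefree_prod_dvdR => //.
  exact: squarefree_dvdR sqf_s (assocR_dvdR r_s).
move=> q q_r; apply: irreducible_dvd_exp (irr_r _ q_r) _.
exact: dvdR_trans (dvdR_trans (dvdR_prod_mem q_r) (assocR_dvdR r_s)) s_ye.
Qed.

End UniqueFactorization.

(* Removing one copy of the top factor [s n] leaves a chain of length [n] if
   [k n = 1] and of length [n.+1] otherwise; [n + (1 < k n)] covers both. *)
Definition decr_at (k : nat -> nat) (j : nat) : nat -> nat :=
  fun i => if i == j then (k i).-1 else k i.

Lemma big_peel (T : Type) (idx : T) (op : Monoid.law idx) (F : nat -> nat -> T)
    (k : nat -> nat) n :
  (forall i, F i 0%N = idx) ->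
  \big[op/idx]_(i < (n + (1 < k n))%N) F i (decr_at k n i) =
    op (\big[op/idx]_(i < n) F i (k i)) (F n (k n).-1).
Proof.
have below_n : \big[op/idx]_(i < n) F i (decr_at k n i) = \big[op/idx]_(i < n) F i (k i).
  by apply: eq_bigr => i _; rewrite /decr_at ltn_eqF.
move=> F0; have [_|kn_le1] := ltnP 1 (k n).
  by rewrite addn1 big_ord_recr /= below_n /decr_at eqxx.
by rewrite addn0 below_n (_ : (k n).-1 = 0%N) ?F0 ?Monoid.mulm1 //; lia.
Qed.

Section Chains.
Variable R : comUnitRingType.
Implicit Types (s : nat -> R) (k : nat -> nat).

Definition sqf_chain n s k : Prop :=
  (forall i, (i < n)%N -> [/\ squarefree (s i), s i \isn't a GRing.unit & (0 < k i)%N]) /\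
  (forall i, (i.+1 < n)%N -> dvdR (s i) (s i.+1) /\ ~ assocR (s i) (s i.+1)).

Lemma prod_peel n s k : (0 < k n)%N ->
  \prod_(i < n.+1) s i ^+ k i =
    (\prod_(i < (n + (1 < k n))%N) s i ^+ decr_at k n i) * s n.
Proof.
move=> kn_gt0; rewrite (@big_peel _ _ _ (fun i e => s i ^+ e)) => [|i]; last exact: expr0.
by rewrite big_ord_recr /= -mulrA -exprSr prednK.
Qed.

Lemma sum_peel n k : (0 < k n)%N ->
  (\sum_(i < (n + (1 < k n))%N) decr_at k n i < \sum_(i < n.+1) k i)%N.
Proof.
move=> kn_gt0; rewrite (@big_peel _ _ _ (fun _ e => e)) // big_ord_recr /=; lia.
Qed.

Lemma sqf_chain_peel n s k :
  sqf_chain n.+1 s k -> sqf_chain (n + (1 < k n))%N s (decr_at k n).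
Proof.
move=> [elt link]; split=> i lt_i; last by apply: link; lia.
have [sqf_si si_Nu ki_gt0] := elt i (ltac:(lia)); split => //.
by rewrite /decr_at; case: eqP => [eq_in|//]; move: lt_i; rewrite eq_in; lia.
Qed.

Lemma sqf_chain_dvdR_top n s k i : sqf_chain n.+1 s k -> (i <= n)%N -> dvdR (s i) (s n).
Proof.
move=> [_ link] le_in.
suff dvd_i j : (i + j <= n)%N -> dvdR (s i) (s (i + j)%N).
  by rewrite -(subnKC le_in); apply: dvd_i; rewrite subnKC.
elim: j => [|j IH] le_ij; first by rewrite addn0; exact: dvdR_refl.
by rewrite addnS; apply: dvdR_trans (IH _) (link _ _).1; lia.
Qed.

Lemma prod_dvdR_exp_sum n s k x : (forall i, (i < n)%N -> dvdR (s i) x) ->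
  dvdR (\prod_(i < n) s i ^+ k i) (x ^+ (\sum_(i < n) k i)).
Proof.
elim: n => [|n IH] dvd_x; first by rewrite !big_ord0; exact: dvdR_refl.
rewrite !big_ord_recr /= exprD; apply: dvdR_mul; last exact/dvdR_exp/dvd_x.
by apply: IH => i lt_i; apply: dvd_x; lia.
Qed.

Lemma dvdR_prod_top n s k : (0 < k n)%N -> dvdR (s n) (\prod_(i < n.+1) s i ^+ k i).
Proof.
by move=> kn_gt0; rewrite big_ord_recr /= -(prednK kn_gt0) exprSr mulrA; eexists.
Qed.

Lemma sqf_chain_prod_unit n s k :
  sqf_chain n s k -> \prod_(i < n) s i ^+ k i \is a GRing.unit -> n = 0%N.
Proof.
case: n => // n [elt _]; have [_ /negP s0_Nu k0_gt0] := elt 0%N isT.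
by rewrite big_ord_recl unitrM unitrX_pos // => /andP[/s0_Nu].
Qed.

Lemma sqf_chain_unpeel n m s t k l :
  sqf_chain n.+1 s k -> sqf_chain m.+1 t l -> assocR (s n) (t m) ->
  (n + (1 < k n))%N = (m + (1 < l m))%N ->
  (forall i, (i < n + (1 < k n))%N ->
     assocR (s i) (t i) /\ decr_at k n i = decr_at l m i) ->
  n.+1 = m.+1 /\ (forall i, (i < n.+1)%N -> assocR (s i) (t i) /\ k i = l i).
Proof.
move=> [elt_s link_s] [elt_t link_t] sn_tm len_eq peeled.
have en : n = m.
  case: (ltngtP n m) => // [lt_nm|lt_mn]; exfalso.
  - have [sn_tn _] := peeled n (ltac:(lia)).
    apply: (link_t n (ltac:(lia))).2; rewrite (_ : n.+1 = m); last by lia.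
    exact: assocR_trans (assocR_sym sn_tn) sn_tm.
  - have [sm_tm _] := peeled m (ltac:(lia)).
    apply: (link_s m (ltac:(lia))).2; rewrite (_ : m.+1 = n); last by lia.
    exact: assocR_trans sm_tm (assocR_sym sn_tm).
subst m; split=> // i; rewrite ltnS leq_eqVlt => /orP[/eqP ->|lt_in]; last first.
  by have := peeled i (ltac:(lia)); rewrite /decr_at (ltn_eqF lt_in).
have [_ _ kn_gt0] := elt_s n (ltnSn n); have [_ _ ln_gt0] := elt_t n (ltnSn n).
have top_decr : (n < n + (1 < k n))%N -> (k n).-1 = (l n).-1.
  by move/peeled => [_]; rewrite /decr_at eqxx.
by split => //; lia.
Qed.

End Chains.

Section ChainUniqueness.
Variable R : idomainType.
Hypothesis HR : isUFD R.
Implicit Types (s t : nat -> R) (k l : nat -> nat) (c d : R).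

Lemma sqf_chain_top_dvdR n m s t k l c d :
  sqf_chain n.+1 s k -> sqf_chain m.+1 t l -> c \is a GRing.unit ->
  c * \prod_(i < n.+1) s i ^+ k i = d * \prod_(i < m.+1) t i ^+ l i ->
  dvdR (t m) (s n).
Proof.
move=> chain_s [elt_t _] cu e; have [sqf_tm _ lm_gt0] := elt_t m (ltnSn m).
apply: (squarefree_dvd_exp HR (e := \sum_(i < n.+1) k i) sqf_tm).
have s_dvd_sn i : (i < n.+1)%N -> dvdR (s i) (s n).
  by move=> lt_i; apply: sqf_chain_dvdR_top chain_s _.
apply: dvdR_trans (prod_dvdR_exp_sum k s_dvd_sn).
by apply: (dvdR_cancel_unitl cu); rewrite e; apply/dvdR_mull/dvdR_prod_top.
Qed.

Lemma sqf_chain_top_assoc n m s t k l c d :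
  sqf_chain n.+1 s k -> sqf_chain m.+1 t l ->
  c \is a GRing.unit -> d \is a GRing.unit ->
  c * \prod_(i < n.+1) s i ^+ k i = d * \prod_(i < m.+1) t i ^+ l i ->
  assocR (s n) (t m).
Proof.
move=> chain_s chain_t cu du e; have [sqf_sn _ _] := chain_s.1 n (ltnSn n).
apply: dvdR_antisym (squarefree_neq0 sqf_sn) _ _.
  exact: sqf_chain_top_dvdR chain_t chain_s du (esym e).
exact: sqf_chain_top_dvdR chain_s chain_t cu e.
Qed.

Lemma sqf_chain_unique n m s t k l c d :
  sqf_chain n s k -> sqf_chain m t l -> c \is a GRing.unit -> d \is a GRing.unit ->
  c * \prod_(i < n) s i ^+ k i = d * \prod_(i < m) t i ^+ l i ->
  n = m /\ (forall i, (i < n)%N -> assocR (s i) (t i) /\ k i = l i).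
Proof.
move: {2}(\sum_(i < n) k i).+1 (ltnSn (\sum_(i < n) k i)) => N.
elim: N n m k l d => // N IH [|n] [|m] k l d lt_N chain_s chain_t cu du e //.
- rewrite big_ord0 mulr1 in e; move: cu; rewrite e unitrM.
  by move=> /andP[_ /(sqf_chain_prod_unit chain_t)].
- rewrite big_ord0 mulr1 in e; move: du; rewrite -e unitrM.
  by move=> /andP[_ /(sqf_chain_prod_unit chain_s)].
have [u uu tm_sn] := sqf_chain_top_assoc chain_s chain_t cu du e.
have [sqf_sn _ kn_gt0] := chain_s.1 n (ltnSn n).
have [_ _ lm_gt0] := chain_t.1 m (ltnSn m).
have e_peeled : c * \prod_(i < (n + (1 < k n))%N) s i ^+ decr_at k n i =
                (d * u) * \prod_(i < (m + (1 < l m))%N) t i ^+ decr_at l m i.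
  apply: (mulIf (squarefree_neq0 sqf_sn)).
  by rewrite -mulrA -prod_peel // e prod_peel // tm_sn; ring.
have du' : d * u \is a GRing.unit by rewrite unitrM du uu.
have lt_N' := leq_trans (sum_peel kn_gt0) lt_N.
have [len_eq peeled] :=
  IH _ _ _ _ _ lt_N' (sqf_chain_peel chain_s) (sqf_chain_peel chain_t) cu du' e_peeled.
exact: sqf_chain_unpeel chain_s chain_t (ex_intro2 _ _ u uu tm_sn) len_eq peeled.
Qed.

End ChainUniqueness.

(* Indices 1..n of the paper are shifted to 0..n-1. *)
Theorem proposition2 (R : idomainType) (HR : isUFD R)
  (n m : nat) (s t : nat -> R) (k l : nat -> nat) (c d : R) :
  (1 <= n)%N -> (1 <= m)%N ->
  (forall i, (i < n)%N -> squarefree (s i) /\ s i \isn't a GRing.unit) ->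
  (forall i, (i < m)%N -> squarefree (t i) /\ t i \isn't a GRing.unit) ->
  (forall i, (i < n)%N -> (1 <= k i)%N) ->
  (forall i, (i < m)%N -> (1 <= l i)%N) ->
  c \is a GRing.unit -> d \is a GRing.unit ->
  (forall i, (i.+1 < n)%N -> dvdR (s i) (s i.+1) /\ ~ assocR (s i) (s i.+1)) ->
  (forall i, (i.+1 < m)%N -> dvdR (t i) (t i.+1) /\ ~ assocR (t i) (t i.+1)) ->
  c * \prod_(i < n) s i ^+ k i = d * \prod_(i < m) t i ^+ l i ->
  n = m /\ (forall i, (i < n)%N -> assocR (s i) (t i) /\ k i = l i).
Proof.
move=> _ _ sqf_s sqf_t k_gt0 l_gt0 cu du link_s link_t e.
have chain_s : sqf_chain n s k.
  by split=> // i lt_i; have [sqf_si si_Nu] := sqf_s i lt_i; split; last exact: k_gt0.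
have chain_t : sqf_chain m t l.
  by split=> // i lt_i; have [sqf_ti ti_Nu] := sqf_t i lt_i; split; last exact: l_gt0.
exact: (sqf_chain_unique HR chain_s chain_t cu du e).
Qed.
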